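(* Let $n>k\geq1$, $r=n-k$, and for $i\in[m]$ let $1\leq h_i\leq n-k$ and $k\leq d_i\leq n-h_i$ be integers. Put $\delta_i=\gcd(h_i,d_i-k)$ and $s_i=\frac{d_i-k+\delta_i}{\delta_i}$, with the pairs indexed so that $s_1\leq s_2\leq\cdots\leq s_m$; let $s=\mathrm{lcm}\big(\frac{d_1-k+h_1}{\delta_1},\ldots,\frac{d_m-k+h_m}{\delta_m}\big)$ and $\ell=s\cdot s_m^n$. Let $F$ be a finite field with $|F|\geq s_mn$ and $\lambda_{i,j}$, $i\in[n]$, $j\in[0,s_m-1]$, be $s_mn$ distinct elements of $F$. Let $\mathcal{C}_4$ be the set of all $(\bm c_1,\ldots,\bm c_n)$, $\bm c_i=(c_{i,0},\ldots,c_{i,\ell-1})\in F^\ell$, satisfying $$\sum_{i=1}^n \lambda_{i,a_i}^{t-1} c_{i,(a,b)}=0\quad\text{for all } a\in[0,s_m^n-1],\ b\in[0,s-1],\ t\in[r].$$ Then $\mathcal{C}_4$ is an $(n,k,\ell)$ MDS array code having the $(h_i,d_i)$-optimal repair property for all $i\in[m]$.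
   Context: Notation: $[n]=\{1,\ldots,n\}$, $[i,j]=\{i,\ldots,j\}$. Each $\tau\in[0,\ell-1]$ is written uniquely as $\tau=b\cdot s_m^n+\sum_{i=1}^n a_i s_m^{i-1}$ with $b\in[0,s-1]$, $a_i\in[0,s_m-1]$; we write $a=(a_1,\ldots,a_n)$ and $\tau=(a,b)$, with $c_{i,(a,b)}=c_{i,\tau}$. An $(n,k,\ell)$ MDS array code over $F$ is an $F$-linear set of vectors $(\bm c_1,\ldots,\bm c_n)$, $\bm c_i\in F^\ell$ (node $i$ stores $\bm c_i$), of dimension $k\ell$, such that any $k$ coordinates determine the codeword. The $(h,d)$-optimal repair property means: for every $h$-subset $\mathcal{H}\subseteq[n]$ and every $d$-subset $\mathcal{R}\subseteq[n]\setminus\mathcal{H}$, each helper $j\in\mathcal{R}$ can send $\beta=\frac{h\ell}{d-k+h}$ symbols of $F$ computed from $\bm c_j$ such that from these $\frac{dh\ell}{d-k+h}$ symbols in total all $\bm c_i$, $i\in\mathcal{H}$, are determined, for every codeword (equality in the cut-set bound). *)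

From HB Require Import structures.
From mathcomp Require Import all_boot all_order all_algebra all_field.
Set Implicit Arguments. Unset Strict Implicit. Unset Printing Implicit Defensive.
Import GRing.Theory.
Local Open Scope ring_scope.

(* Parameters of the m repair pairs (h_i, d_i), 0-indexed: i < m. *)
Definition delta (k : nat) (h d : nat -> nat) (i : nat) : nat :=
  gcdn (h i) (d i - k).
Definition sI (k : nat) (h d : nat -> nat) (i : nat) : nat :=
  ((d i - k + delta k h d i) %/ delta k h d i)%N.
Definition smax (k m : nat) (h d : nat -> nat) : nat := sI k h d m.-1.
Definition sL (k m : nat) (h d : nat -> nat) : nat :=
  \big[lcmn/1%N]_(i < m) ((d i - k + h i) %/ delta k h d i)%N.
Definition ell (n k m : nat) (h d : nat -> nat) : nat :=
  (sL k m h d * smax k m h d ^ n)%N.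

(* a_{i+1} : the (0-indexed) i-th base-s_m digit of tau, where
   tau = b * s_m^n + sum_{i} a_{i+1} s_m^i *)
Definition digit (sm : nat) (i : nat) (tau : nat) : nat :=
  ((tau %/ sm ^ i) %% sm)%N.

(* The code C_4 : codewords are n x ell matrices, row i = node vector c_{i+1}. *)
Definition inC4 (F : fieldType) (n r sm L : nat) (lambda : 'I_n -> nat -> F)
    (c : 'M[F]_(n, L)) : Prop :=
  forall (tau : 'I_L) (t : nat), (t < r)%N ->
    \sum_(i < n) (lambda i (digit sm i tau)) ^+ t * c i tau = 0.

Definition MDS_array_code (F : fieldType) (n k L : nat)
    (C : 'M[F]_(n, L) -> Prop) : Prop :=
  (exists U : {vspace 'M[F]_(n, L)},
      (forall c, c \in U <-> C c) /\ \dim U = (k * L)%N) /\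
  (forall K : {set 'I_n}, #|K| = k ->
     forall c c', C c -> C c' ->
       (forall i, i \in K -> row i c = row i c') -> c = c').

Definition optimal_repair (F : fieldType) (n k L : nat)
    (C : 'M[F]_(n, L) -> Prop) (h d : nat) : Prop :=
  forall HH RR : {set 'I_n}, #|HH| = h -> #|RR| = d -> [disjoint HH & RR] ->
  exists g : 'I_n -> 'rV[F]_L -> 'rV[F]_((h * L) %/ (d - k + h)),
    forall c c', C c -> C c' ->
      (forall j, j \in RR -> g j (row j c) = g j (row j c')) ->
      forall i, i \in HH -> row i c = row i c'.

(* For every coordinate tau, the n - k checks form a Vandermonde system in the
   entries c_{i,tau} with pairwise distinct nodes lambda_{i,a_i}, so any k rows
   determine the others; with rank-nullity this gives an MDS code of dimension
   k ell.
   To repair h failed nodes from d helpers, split the failed nodes into h/delta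
   groups of delta nodes, and the b-index into blocks of p = (d - k + h)/delta
   layers.  A query fixes a group and a coordinate in the layer of that group;
   its s_i coordinates are this one and the s_i - 1 coordinates obtained by
   shifting the digits of the nodes of the group by 1, ..., s_i - 1, placed in
   the last s_i - 1 layers of the block.  Each helper sends, per query, the sum
   of its entries over the query: beta = h ell/(d - k + h) symbols.  Summing
   the checks over a query leaves a Vandermonde system with at most
   (n - d) + delta (s_i - 1) = n - k distinct nodes, which yields the entries
   of the group and the query sums of the other failed nodes; from these sums
   the entries in the layers of the other groups follow. *)

From HB Require Import structures.
From mathcomp Require Import all_boot all_order all_algebra all_field.
From mathcomp Require Import zify.
Set Implicit Arguments. Unset Strict Implicit. Unset Printing Implicit Defensive.
Import GRing.Theory.

(* [radix_encode sm n a b] is the coordinate tau = (a, b), i.e.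
   b sm^n + sum_(i < n) a_i sm^i. *)
Fixpoint radix_encode (sm n : nat) (a : nat -> nat) (b : nat) : nat :=
  if n is n'.+1 then a 0 + sm * radix_encode sm n' (fun i => a i.+1) b else b.

Section RadixEncode.
Variables (sm n : nat) (a : nat -> nat) (b : nat).
Hypothesis a_lt : forall i, i < n -> a i < sm.

Lemma radix_encode_lt : radix_encode sm n a b < sm ^ n * b.+1.
Proof.
elim: n a a_lt => [|n' IH] a' lt_a /=; first by rewrite mul1n.
have := IH _ (fun i => lt_a i.+1); have := lt_a 0 isT.
rewrite expnS -mulnA; set x := radix_encode _ _ _ _; nia.
Qed.

Lemma divn_radix_encode : radix_encode sm n a b %/ sm ^ n = b.
Proof.
elim: n a a_lt => [|n' IH] a' lt_a /=; first by rewrite divn1.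
have sm_gt0 : 0 < sm by apply: leq_ltn_trans (lt_a 0 isT).
rewrite expnS divnMA (addnC (a' 0)) (mulnC sm) divnMDl // (divn_small (lt_a 0 isT)) addn0.
by apply: IH => i lt_i; apply: lt_a.
Qed.

Lemma digit_radix_encode i : i < n -> digit sm i (radix_encode sm n a b) = a i.
Proof.
rewrite /digit; elim: n a a_lt i => [//|n' IH] a' lt_a [|i] /= lt_i.
  by rewrite divn1 addnC mulnC modnMDl modn_small ?lt_a.
have sm_gt0 : 0 < sm by apply: leq_ltn_trans (lt_a 0 isT).
rewrite expnS divnMA (addnC (a' 0)) (mulnC sm) divnMDl // (divn_small (lt_a 0 isT)) addn0.
by apply: IH => // j lt_j; apply: lt_a.
Qed.

End RadixEncode.

Lemma eq_radix_encode sm n a a' b : (forall i, i < n -> a i = a' i) ->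
  radix_encode sm n a b = radix_encode sm n a' b.
Proof.
elim: n a a' => [//|n IH] a a' eq_a /=.
by rewrite eq_a // (IH _ (fun i => a' i.+1)) // => i lt_i; apply: eq_a.
Qed.

Lemma radix_encode_digits sm n t : 0 < sm ->
  radix_encode sm n (digit sm ^~ t) (t %/ sm ^ n) = t.
Proof.
rewrite /digit => sm_gt0; elim: n t => [|n IH] t /=; first by rewrite divn1.
rewrite divn1 (@eq_radix_encode _ _ _ (fun i => t %/ sm %/ sm ^ i %% sm)).
  by rewrite expnS divnMA IH addnC mulnC -divn_eq.
by move=> i _; rewrite /= -divnMA -expnS.
Qed.

Local Open Scope ring_scope.

(* Pair the identities with the coefficients of the polynomial whose roots are
   the values of [z] other than [v]. *)
Lemma power_sums_eq0_fiber (F : fieldType) (J : finType) (P : pred J)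
    (z w : J -> F) (vals : seq F) :
  {in P, forall q, z q \in vals} ->
  (forall t, (t < size vals)%N -> \sum_(q | P q) z q ^+ t * w q = 0) ->
  forall v, \sum_(q | P q && (z q == v)) w q = 0.
Proof.
move=> z_vals sums_eq0 v.
have [q0 /andP[Pq0 /eqP zq0] | no_q] := pickP (fun q => P q && (z q == v));
  last by rewrite big_pred0.
have v_vals : v \in undup vals by rewrite mem_undup -zq0 z_vals.
pose S := rem v (undup vals); pose p := \prod_(y <- S) ('X - y%:P).
have size_p : (size p <= size vals)%N.
  rewrite size_prod_XsubC size_rem // prednK ?size_undup //.
  by case: (undup vals) v_vals.
have pv_neq0 : p.[v] != 0.
  rewrite horner_prod prodf_seq_neq0; apply/allP => y yS /=.
  rewrite hornerXsubC subr_eq0; apply: contraTneq yS => <-.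
  by rewrite mem_rem_uniqF ?undup_uniq.
have pz_eq0 q : P q -> z q != v -> p.[z q] = 0.
  move=> Pq zqv; apply/rootP; rewrite root_prod_XsubC mem_rem_uniq ?undup_uniq //.
  by rewrite inE zqv mem_undup z_vals.
have : \sum_(q | P q) p.[z q] * w q = 0.
  under eq_bigr => q _ do rewrite horner_coef mulr_suml.
  rewrite exchange_big big1 // => t _.
  under eq_bigr => q _ do rewrite -mulrA.
  by rewrite -mulr_sumr sums_eq0 ?mulr0 // (leq_trans _ size_p).
rewrite (bigID (fun q => z q == v)) /= [X in _ + X]big1 ?addr0; last first.
  by move=> q /andP[Pq zqv]; rewrite pz_eq0 ?mul0r.
rewrite (eq_bigr (fun q => p.[v] * w q)); last by move=> q /andP[_ /eqP ->].
by rewrite -mulr_sumr => /eqP; rewrite mulf_eq0 (negbTE pv_neq0) => /eqP.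
Qed.

Section ParityChecks.
Variables (F : fieldType) (n r sm L : nat) (lambda : 'I_n -> nat -> F).
Implicit Types c : 'M[F]_(n, L).

Lemma inC4B c c' :
  inC4 r sm lambda c -> inC4 r sm lambda c' -> inC4 r sm lambda (c - c').
Proof.
move=> cC c'C tau t lt_t; under eq_bigr do rewrite !mxE mulrBr.
by rewrite sumrB cC ?c'C ?subr0.
Qed.

Hypothesis sm_gt0 : (0 < sm)%N.
Hypothesis lambda_inj : forall i i' j j', (j < sm)%N -> (j' < sm)%N ->
  lambda i j = lambda i' j' -> i = i' /\ j = j'.

Lemma inC4_eq_on_rows (K : {set 'I_n}) c c' : (#|~: K| <= r)%N ->
  inC4 r sm lambda c -> inC4 r sm lambda c' ->
  (forall i, i \in K -> row i c = row i c') -> c = c'.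
Proof.
move=> card_K cC c'C eq_K; apply/matrixP => i tau.
have [iK|iNK] := boolP (i \in K); first by have /rowP/(_ tau) := eq_K i iK; rewrite !mxE.
apply/eqP; rewrite -subr_eq0; apply/eqP.
pose e := c - c'; have eC : inC4 r sm lambda e by apply: inC4B.
have eK j : j \in K -> e j tau = 0.
  by move=> jK; have /rowP/(_ tau) := eq_K j jK; rewrite !mxE => ->; rewrite subrr.
pose z j := lambda j (digit sm j tau).
have z_vals : {in [pred j | j \notin K], forall j, z j \in [seq z j | j in ~: K]}.
  by move=> j jNK; apply: image_f; rewrite inE.
have sums_eq0 t : (t < size [seq z j | j in ~: K])%N ->
    \sum_(j | j \notin K) z j ^+ t * e j tau = 0.
  rewrite size_image => lt_t.
  rewrite -[RHS](eC tau t (leq_trans lt_t card_K)) [RHS](bigID [pred j | j \notin K]).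
  rewrite [X in _ = _ + X]big1 ?addr0 // => j; rewrite negbK => jK.
  by rewrite eK ?mulr0.
have := power_sums_eq0_fiber z_vals sums_eq0 (z i).
rewrite (eq_bigl (pred1 i)) ?big_pred1_eq ?mxE // => j /=.
by apply/andP/eqP => [[_ /eqP /lambda_inj []] | ->] //; exact: ltn_pmod.
Qed.

End ParityChecks.

Definition syndrome (F : fieldType) (n r sm L : nat) (lambda : 'I_n -> nat -> F)
    (c : 'M[F]_(n, L)) : 'M[F]_(r, L) :=
  \matrix_(t < r, tau < L) \sum_(i < n) lambda i (digit sm i tau) ^+ t * c i tau.

Lemma syndrome_is_linear (F : fieldType) (n r sm L : nat) (lambda : 'I_n -> nat -> F) :
  linear (@syndrome F n r sm L lambda).
Proof.
move=> a x y; apply/matrixP => t tau; rewrite !mxE mulr_sumr -big_split.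
by apply: eq_bigr => i _; rewrite !mxE mulrDr mulrCA.
Qed.

HB.instance Definition _ (F : fieldType) (n r sm L : nat) (lambda : 'I_n -> nat -> F) :=
  GRing.isLinear.Build F _ _ _ (@syndrome F n r sm L lambda)
    (@syndrome_is_linear F n r sm L lambda).

Lemma inC4_syndrome (F : fieldType) (n r sm L : nat) (lambda : 'I_n -> nat -> F)
    (c : 'M[F]_(n, L)) :
  inC4 r sm lambda c <-> syndrome r sm lambda c = 0.
Proof.
split=> [cC | /matrixP c0 tau t lt_t].
  by apply/matrixP => t tau; rewrite !mxE cC.
by have := c0 (Ordinal lt_t) tau; rewrite !mxE.
Qed.

Section MDS.
Variables (F : fieldType) (n k sm L : nat) (lambda : 'I_n -> nat -> F).
Hypothesis le_kn : (k <= n)%N.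
Hypothesis sm_gt0 : (0 < sm)%N.
Hypothesis lambda_inj : forall i i' j j', (j < sm)%N -> (j' < sm)%N ->
  lambda i j = lambda i' j' -> i = i' /\ j = j'.
Implicit Types c : 'M[F]_(n, L).

Let code_space : {vspace 'M[F]_(n, L)} :=
  lker (linfun (@syndrome F n (n - k) sm L lambda)).

Lemma mem_code_space c : c \in code_space <-> inC4 (n - k) sm lambda c.
Proof. by rewrite memv_ker lfunE inC4_syndrome; split=> /eqP. Qed.

Lemma inC4_eq_on_k_rows (K : {set 'I_n}) c c' : #|K| = k ->
  inC4 (n - k) sm lambda c -> inC4 (n - k) sm lambda c' ->
  (forall i, i \in K -> row i c = row i c') -> c = c'.
Proof.
move=> card_K; apply: inC4_eq_on_rows => //.
by rewrite cardsCs setCK card_ord card_K.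
Qed.

(* The code is cut out by (n - k) L checks, and it meets the kernel of the
   projection onto the first k rows trivially. *)
Lemma dim_code_space : \dim code_space = (k * L)%N.
Proof.
pose f := linfun (@syndrome F n (n - k) sm L lambda).
pose g := linfun (rowsub (widen_ord le_kn) : 'M[F]_(n, L) -> 'M[F]_(k, L)).
have rank_nullity := limg_ker_dim f fullv.
rewrite capfv dimvf /dim /= in rank_nullity.
have ker_f : \dim (lker f) = \dim code_space by [].
have dim_img : (\dim (f @: fullv) <= (n - k) * L)%N.
  by apply: leq_trans (dimvS (subvf _)) _; rewrite dimvf /dim.
have cap0 : (code_space :&: lker g = 0)%VS.
  apply/eqP; rewrite -subv0; apply/subvP => c; rewrite memv_cap memv0.
  case/andP=> /mem_code_space cC; rewrite memv_ker lfunE /= => /eqP gc0.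
  apply/eqP; apply: (@inC4_eq_on_k_rows [set widen_ord le_kn i | i in 'I_k]) cC _ _.
  - by rewrite card_imset ?card_ord // => i j /(congr1 val) /= /val_inj.
  - by move=> tau t _; rewrite big1 // => i _; rewrite mxE mulr0.
  move=> _ /imsetP[i _ ->]; apply/rowP => tau.
  by have /matrixP/(_ i tau) := gc0; rewrite !mxE.
have dim_proj : (\dim code_space <= k * L)%N.
  rewrite -(limg_dim_eq cap0); apply: leq_trans (dimvS (subvf _)) _.
  by rewrite dimvf /dim.
have : (n * L = k * L + (n - k) * L)%N by rewrite -mulnDl subnKC.
lia.
Qed.

Lemma inC4_MDS : MDS_array_code k (inC4 (n - k) sm lambda (L := L)).
Proof.
split; last by move=> K card_K c c'; apply: inC4_eq_on_k_rows.
by exists code_space; split; [apply: mem_code_space | apply: dim_code_space].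
Qed.

End MDS.

Section Repair.
Variables (F : fieldType) (n r sm s p u de si : nat) (lambda : 'I_n -> nat -> F).
Variables (HH RR : {set 'I_n}).
Local Close Scope ring_scope.
Hypothesis si_gt0 : 0 < si.
Hypothesis si_le_sm : si <= sm.
Hypothesis u_gt0 : 0 < u.
Hypothesis de_gt0 : 0 < de.
Hypothesis pS : p.+1 = si + u.
Hypothesis p_dvd_s : p %| s.
Hypothesis card_HH : #|HH| = u * de.
Hypothesis disjoint_HR : [disjoint HH & RR].
Hypothesis card_RR : #|~: RR| + de * si.-1 <= r.
Hypothesis lambda_inj : forall i i' j j', j < sm -> j' < sm ->
  lambda i j = lambda i' j' -> i = i' /\ j = j'.

Local Notation Q := (sm ^ n).
Local Notation L := (s * sm ^ n).
Local Notation beta := (u * (s %/ p) * sm ^ n).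

Let sm_gt0 : 0 < sm. Proof. exact: leq_trans si_le_sm. Qed.
Let Q_gt0 : 0 < Q. Proof. by rewrite expn_gt0 sm_gt0. Qed.
Let p_gt0 : 0 < p. Proof. lia. Qed.

Definition group (f : 'I_n) : nat := index f (enum HH) %/ de.
Definition in_group (g : nat) (f : 'I_n) : bool := (f \in HH) && (group f == g).
Definition in_groupn (g i : nat) : bool :=
  [exists f : 'I_n, (val f == i) && in_group g f].

Lemma in_groupnE g (f : 'I_n) : in_groupn g f = in_group g f.
Proof.
apply/existsP/idP => [[f' /andP[/eqP/val_inj -> //]] | fg].
by exists f; rewrite eqxx.
Qed.

Lemma group_lt f : f \in HH -> group f < u.
Proof. by move=> fH; rewrite ltn_divLR // -card_HH cardE index_mem mem_enum. Qed.

Lemma in_group_notin_RR g f : in_group g f -> f \notin RR.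
Proof. by case/andP=> fH _; rewrite (disjointFr disjoint_HR fH). Qed.

Lemma card_group g : #|[set f | in_group g f]| <= de.
Proof.
pose rank (f : 'I_n) : 'I_de := Ordinal (ltn_pmod (index f (enum HH)) de_gt0).
rewrite -(@card_in_imset _ _ rank); first by rewrite (leq_trans (max_card _)) ?card_ord.
move=> f1 f2; rewrite !inE => /andP[f1H /eqP g1] /andP[f2H /eqP g2] /(congr1 val) /= eq_mod.
have eq_idx : index f1 (enum HH) = index f2 (enum HH).
  by rewrite (divn_eq (index f1 _) de) (divn_eq (index f2 _) de) eq_mod -/(group f1) -/(group f2) g1 g2.
by rewrite -(nth_index f1 (_ : f1 \in enum HH)) ?mem_enum // eq_idx nth_index ?mem_enum.
Qed.

(* A query [q < beta] encodes a base point [qbase q < Q], a group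
   [qgroup q < u] of failed nodes and a block [qblock q < s / p]. *)
Definition qbase (q : nat) : nat := q %% Q.
Definition qgroup (q : nat) : nat := q %/ Q %% u.
Definition qblock (q : nat) : nat := q %/ Q %/ u.

Lemma query_decomp q b0 g A : b0 < s %/ p -> g < u -> A < Q ->
  q = (b0 * u + g) * Q + A ->
  [/\ q < beta, qbase q = A, qgroup q = g & qblock q = b0].
Proof.
move=> lt_b0 lt_g lt_A ->.
have qQ : ((b0 * u + g) * Q + A) %/ Q = b0 * u + g.
  by rewrite divnMDl ?Q_gt0 // (divn_small lt_A) addn0.
rewrite /qbase /qgroup /qblock qQ modnMDl modn_small // modnMDl modn_small //.
rewrite divnMDl // (divn_small lt_g) addn0; split=> //.
apply: leq_trans (_ : (b0 * u + g).+1 * Q <= _); first by rewrite mulSnr ltn_add2l.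
rewrite leq_mul2r; apply/orP; right.
apply: (@leq_trans (b0.+1 * u)); first by rewrite mulSnr -addnS leq_add2l.
by rewrite mulnC leq_mul2l lt_b0 orbT.
Qed.

(* The coordinates are grouped into s / p blocks of p layers; in the block of
   a query, layer [g] carries its base point and layers [u, ..., p - 1] carry
   the shifted points. *)
Definition layer (tau : nat) : nat := tau %/ Q %% p.

Definition offset (g k : nat) : nat := if k is k'.+1 then u + k' else g.

Definition qdigit (q k i : nat) : nat :=
  (digit sm i (qbase q) + (if in_groupn (qgroup q) i then k else 0)) %% sm.

Definition qcoord (q k : nat) : nat :=
  radix_encode sm n (qdigit q k) (qblock q * p + offset (qgroup q) k).

Lemma qdigit_lt q k i : qdigit q k i < sm.
Proof. exact: ltn_pmod _ sm_gt0. Qed.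

Lemma offset_lt g k : g < u -> k < si -> offset g k < p.
Proof. by case: k => [|k] /=; lia. Qed.

Lemma qcoord_lt (q : 'I_beta) (k : 'I_si) : qcoord q k < L.
Proof.
have lt_q : q %/ Q < u * (s %/ p) by rewrite ltn_divLR ?Q_gt0.
have lt_block : qblock q < s %/ p by rewrite /qblock ltn_divLR // (mulnC (s %/ p)).
have lt_off : offset (qgroup q) k < p by rewrite offset_lt ?ltn_pmod.
have lt_layer : qblock q * p + offset (qgroup q) k < s.
  apply: (@leq_trans ((qblock q).+1 * p)); first by rewrite mulSnr ltn_add2l.
  by rewrite -[leqRHS](divnK p_dvd_s) leq_mul2r lt_block orbT.
apply: leq_trans (radix_encode_lt _ (fun i _ => qdigit_lt q k i)) _.
by rewrite mulnC leq_mul2r lt_layer orbT.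
Qed.

Definition qtau (q : 'I_beta) (k : 'I_si) : 'I_L := Ordinal (qcoord_lt q k).

Lemma digit_qtau q k (i : 'I_n) : digit sm i (qtau q k) = qdigit q k i.
Proof. by rewrite digit_radix_encode // => j _; apply: qdigit_lt. Qed.

Lemma qtau_layer q k : layer (qtau q k) = offset (qgroup q) k.
Proof.
rewrite /layer divn_radix_encode => [|j _]; last exact: qdigit_lt.
by rewrite modnMDl modn_small // offset_lt ?ltn_pmod.
Qed.

Lemma qdigit_out q k (f : 'I_n) :
  ~~ in_group (qgroup q) f -> qdigit q k f = qdigit q 0 f.
Proof. by move=> fNg; rewrite /qdigit in_groupnE (negbTE fNg). Qed.

Lemma qtau_onto (tau : 'I_L) g (k : 'I_si) : g < u ->
  layer tau = offset g k -> exists q : 'I_beta, qgroup q = g /\ qtau q k = tau.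
Proof.
move=> lt_g layer_tau.
pose a' i := if in_groupn g i then (digit sm i tau + (sm - k)) %% sm else digit sm i tau.
have a'_lt i : i < n -> a' i < sm.
  by move=> _; rewrite /a'; case: ifP => _; rewrite ltn_pmod ?sm_gt0.
have lt_A : radix_encode sm n a' 0 < Q.
  by rewrite -[Q]muln1; apply: radix_encode_lt.
have lt_b0 : tau %/ Q %/ p < s %/ p.
  by rewrite ltn_divLR ?p_gt0 // divnK // ltn_divLR ?Q_gt0.
have [lt_q qA qg qb] := query_decomp lt_b0 lt_g lt_A erefl.
exists (Ordinal lt_q); split=> //; apply: val_inj => /=.
rewrite /qcoord qg qb -layer_tau -divn_eq.
rewrite -[RHS](radix_encode_digits n tau sm_gt0); apply: eq_radix_encode => i lt_i.
rewrite /qdigit qA qg digit_radix_encode // /a'.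
case: ifP => _; last by rewrite addn0 modn_small ?ltn_pmod ?sm_gt0.
have le_k_sm : k <= sm by rewrite ltnW // (leq_trans (ltn_ord k)).
by rewrite modnDml -addnA subnK // modnDr modn_small ?ltn_pmod ?sm_gt0.
Qed.

Local Open Scope ring_scope.

Lemma lambda_qdigit_inj q q' k k' i i' :
  lambda i (qdigit q k i) = lambda i' (qdigit q' k' i') ->
  i = i' /\ qdigit q k i = qdigit q' k' i'.
Proof. by apply: lambda_inj; apply: qdigit_lt. Qed.

Section VanishingDownloads.
Variable e : 'M[F]_(n, L).
Hypothesis e_code : inC4 r sm lambda e.
Hypothesis e_downloads :
  forall (q : 'I_beta) j, j \in RR -> \sum_(k < si) e j (qtau q k) = 0.

Let z (q : 'I_beta) (x : 'I_n * 'I_si) : F := lambda x.1 (qdigit q x.2 x.1).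

(* Summing the checks over the coordinates of a query, each helper only
   contributes a multiple of its download, because helpers are never
   shifted. *)
Lemma query_power_sums (q : 'I_beta) t : (t < r)%N ->
  \sum_(x | x.1 \notin RR) z q x ^+ t * e x.1 (qtau q x.2) = 0.
Proof.
move=> lt_t.
have helper_out j : j \in RR -> ~~ in_group (qgroup q) j.
  by move=> jR; apply: contraL jR => /in_group_notin_RR.
have : \sum_(i < n) \sum_(k < si)
    lambda i (digit sm i (qtau q k)) ^+ t * e i (qtau q k) = 0.
  by rewrite exchange_big big1 // => k _; apply: e_code.
rewrite (bigID (mem RR)) /= big1 ?add0r => [|j jR]; last first.
  under eq_bigr => k _ do rewrite digit_qtau qdigit_out ?helper_out //.
  by rewrite -mulr_sumr e_downloads ?mulr0.
rewrite (pair_big_dep (fun i => i \notin RR) (fun _ => xpredT)) /= => sum_eq0.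
by rewrite -[RHS]sum_eq0; apply: congr_big => [//|x|x _]; rewrite ?andbT ?digit_qtau.
Qed.

(* At most r distinct points: one per node outside the group, and one per
   (node, shift) pair inside it. *)
Lemma query_values (q : 'I_beta) : exists2 vals : seq F, (size vals <= r)%N &
  {in [pred x | x.1 \notin RR], forall x, z q x \in vals}.
Proof.
set G := [set f | in_group (qgroup q) f].
exists ([seq lambda f (qdigit q 0 f) | f in ~: RR :\: G] ++
        [seq z q x | x in setX G [set: 'I_si]]); last first.
  move=> [i k] iNR; rewrite mem_cat; have [iG|iNG] := boolP (i \in G).
    by apply/orP; right; apply: image_f; rewrite in_setX iG in_setT.
  apply/orP; left; rewrite /z qdigit_out; last by rewrite inE in iNG.
  by apply: image_f; rewrite in_setD iNG in_setC.
have G_RR : G \subset ~: RR.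
  by apply/subsetP => f; rewrite !inE => /in_group_notin_RR.
rewrite size_cat !size_image cardsX cardsT card_ord.
have -> : #|~: RR :\: G| = (#|~: RR| - #|G|)%N.
  by rewrite cardsD (setIidPr G_RR).
have card_G : (#|G| <= de)%N by apply: card_group.
have := leq_mul card_G (leqnn si.-1).
have := subset_leq_card G_RR.
have -> : (#|G| * si = #|G| + #|G| * si.-1)%N by rewrite -mulnS prednK.
move: card_RR; set x := si.-1; set y := #|~: RR|; set g := #|G|; lia.
Qed.

Lemma query_fiber_eq0 (q : 'I_beta) v :
  \sum_(x | (x.1 \notin RR) && (z q x == v)) e x.1 (qtau q x.2) = 0.
Proof.
have [vals size_vals z_vals] := query_values q.
apply: (power_sums_eq0_fiber z_vals) => t lt_t.
exact: query_power_sums (leq_trans lt_t size_vals).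
Qed.

Lemma query_group_eq0 (q : 'I_beta) f (k : 'I_si) :
  in_group (qgroup q) f -> e f (qtau q k) = 0.
Proof.
move=> fg; have := query_fiber_eq0 q (z q (f, k)).
rewrite (eq_bigl (pred1 (f, k))) ?big_pred1_eq // => -[i k'] /=.
apply/andP/eqP => [[_ /eqP z_eq] | [-> ->]]; last by rewrite (in_group_notin_RR fg).
have [/= eq_if] := lambda_qdigit_inj z_eq; subst i.
rewrite /qdigit in_groupnE fg => /eqP; rewrite eqn_modDl !modn_small.
- by move=> /eqP /val_inj ->.
- exact: leq_trans (ltn_ord k) si_le_sm.
- exact: leq_trans (ltn_ord k') si_le_sm.
Qed.

Lemma query_sum_eq0 (q : 'I_beta) f : f \in HH -> ~~ in_group (qgroup q) f ->
  \sum_(k < si) e f (qtau q k) = 0.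
Proof.
move=> fH fNg; have := query_fiber_eq0 q (lambda f (qdigit q 0 f)).
rewrite (eq_bigl (fun x => (x.1 == f) && xpredT x.2)) => [|[i k] /=]; last first.
  rewrite andbT; apply/andP/eqP => [[_ /eqP z_eq] | ->].
    by case: (lambda_qdigit_inj z_eq).
  by rewrite /z /= qdigit_out // (disjointFr disjoint_HR fH).
by rewrite -(pair_big (pred1 f) xpredT (fun i k => e i (qtau q k))) big_pred1_eq.
Qed.

Lemma failed_eq0_at_layer f (tau : 'I_L) : f \in HH ->
  (layer tau == group f) || (u <= layer tau)%N -> e f tau = 0.
Proof.
move=> fH layer_tau.
have lt_layer : (layer tau < p)%N by rewrite ltn_pmod ?p_gt0.
pose k := if layer tau == group f then 0 else (layer tau - u).+1.
have lt_k : (k < si)%N by rewrite /k; case: eqP layer_tau => //= _; lia.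
have off_k : layer tau = offset (group f) (Ordinal lt_k).
  by rewrite /k /=; case: eqP layer_tau => //= _; lia.
have [q [qg <-]] := qtau_onto (group_lt fH) off_k.
by apply: query_group_eq0; rewrite qg /in_group fH eqxx.
Qed.

(* A layer [g < u] other than the group of [f] is the base layer of a query
   for which [f] is not shifted; the other points of that query lie in layers
   [>= u], where [f] is already known to vanish. *)
Lemma failed_eq0 f (tau : 'I_L) : f \in HH -> e f tau = 0.
Proof.
move=> fH; have [|] := boolP ((layer tau == group f) || (u <= layer tau)%N).
  exact: failed_eq0_at_layer.
rewrite negb_or -ltnNge => /andP[layer_neq lt_layer].
have [q [qg qtau0]] := qtau_onto (k := Ordinal si_gt0) lt_layer erefl.
have fNg : ~~ in_group (qgroup q) f by rewrite /in_group fH qg eq_sym.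
have := query_sum_eq0 fH fNg; rewrite (bigD1 (Ordinal si_gt0)) //= qtau0.
rewrite big1 ?addr0 // => k k_neq0; apply: failed_eq0_at_layer => //.
rewrite qtau_layer; case: k k_neq0 => -[|k] //= lt_k _.
by rewrite leq_addr orbT.
Qed.

End VanishingDownloads.

Definition download (x : 'rV[F]_L) : 'rV[F]_beta :=
  \row_q \sum_(k < si) x ord0 (qtau q k).

Lemma repair_by_downloads :
  exists g : 'I_n -> 'rV[F]_L -> 'rV[F]_beta,
    forall c c', inC4 r sm lambda c -> inC4 r sm lambda c' ->
      (forall j, j \in RR -> g j (row j c) = g j (row j c')) ->
      forall i, i \in HH -> row i c = row i c'.
Proof.
exists (fun _ => download) => c c' cC c'C eq_dl i iH.
apply/rowP => tau; rewrite !mxE; apply/eqP; rewrite -subr_eq0; apply/eqP.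
have := @failed_eq0 (c - c') (inC4B cC c'C) _ i tau iH; rewrite !mxE; apply.
move=> q j jR; have /rowP/(_ q) := eq_dl j jR; rewrite !mxE.
under eq_bigr do rewrite mxE.
under [RHS]eq_bigr do rewrite mxE.
move=> eq_q.
by under eq_bigr do rewrite !mxE; rewrite sumrB eq_q subrr.
Qed.

End Repair.

Local Close Scope ring_scope.

Section PairParameters.
Variables (k m : nat) (h d : nat -> nat) (i : nat).
Hypothesis h_gt0 : 0 < h i.
Local Notation de := (delta k h d i).
Local Notation p := ((d i - k + h i) %/ delta k h d i).

Lemma delta_gt0 : 0 < de.
Proof. by rewrite gcdn_gt0 h_gt0. Qed.

Lemma sIE : sI k h d i = ((d i - k) %/ de).+1.
Proof. by rewrite /sI divnDl ?dvdn_gcdr // divnn delta_gt0 addn1. Qed.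

Lemma sI_gt0 : 0 < sI k h d i.
Proof. by rewrite sIE. Qed.

Lemma delta_mul_sI : de * (sI k h d i).-1 = d i - k.
Proof. by rewrite sIE /= mulnC divnK ?dvdn_gcdr. Qed.

Lemma h_divnK : h i = h i %/ de * de.
Proof. by rewrite divnK ?dvdn_gcdl. Qed.

Lemma layersS : p.+1 = sI k h d i + h i %/ de.
Proof. by rewrite divnDl ?dvdn_gcdl ?dvdn_gcdr // sIE addSn. Qed.

Lemma layers_dvd_sL : i < m -> p %| sL k m h d.
Proof. by move=> lt_im; apply: (biglcmn_sup (Ordinal lt_im)). Qed.

Lemma download_size n : i < m ->
  h i * ell n k m h d %/ (d i - k + h i) =
  h i %/ de * (sL k m h d %/ p) * smax k m h d ^ n.
Proof.
move=> lt_im; have p_dvd := layers_dvd_sL lt_im.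
have p_gt0 : 0 < p.
  by rewrite divn_gt0 ?delta_gt0 // (leq_trans (dvdn_leq h_gt0 (dvdn_gcdl _ _))) ?leq_addl.
have dkh : d i - k + h i = p * de.
  by rewrite divnK // dvdn_add ?dvdn_gcdr ?dvdn_gcdl.
rewrite [in LHS]dkh /ell -{1}(divnK p_dvd) {1}h_divnK.
set u := h i %/ de; set S := sL k m h d %/ p; set Q := smax k m h d ^ n.
have -> : u * de * (S * p * Q) = p * de * (u * S * Q) by nia.
by rewrite mulKn // muln_gt0 p_gt0 delta_gt0.
Qed.

End PairParameters.

Lemma inC4_optimal_repair (F : fieldType) (n k m : nat) (h d : nat -> nat)
    (lambda : 'I_n -> nat -> F) (i : nat) :
  i < m -> 0 < h i -> k <= d i <= n - h i -> sI k h d i <= smax k m h d ->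
  (forall f f' j j', j < smax k m h d -> j' < smax k m h d ->
     lambda f j = lambda f' j' -> f = f' /\ j = j') ->
  optimal_repair k (inC4 (n - k) (smax k m h d) (L := ell n k m h d) lambda) (h i) (d i).
Proof.
move=> lt_im h_gt0 /andP[le_kd le_dn] le_sI lambda_inj HH RR card_H card_R disj.
rewrite download_size //.
apply: (repair_by_downloads (de := delta k h d i) (si := sI k h d i)) => //.
- exact: sI_gt0.
- by rewrite divn_gt0 ?delta_gt0 // dvdn_leq ?dvdn_gcdl.
- exact: delta_gt0.
- exact: layersS.
- exact: layers_dvd_sL.
- by rewrite -h_divnK.
- by rewrite delta_mul_sI //; have := cardsC RR; rewrite card_ord card_R; lia.
Qed.

Local Open Scope ring_scope.

Theorem theorem5 (F : finFieldType) (n k m : nat) (h d : nat -> nat)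
  (lambda : 'I_n -> nat -> F) :
  (1 <= k)%N -> (k < n)%N -> (0 < m)%N ->
  (forall i, (i < m)%N -> (1 <= h i <= n - k)%N) ->
  (forall i, (i < m)%N -> (k <= d i <= n - h i)%N) ->
  (forall i j, (i <= j)%N -> (j < m)%N -> (sI k h d i <= sI k h d j)%N) ->
  (smax k m h d * n <= #|F|)%N ->
  (forall (i i' : 'I_n) (j j' : nat),
      (j < smax k m h d)%N -> (j' < smax k m h d)%N ->
      lambda i j = lambda i' j' -> i = i' /\ j = j') ->
  let C := inC4 (n - k) (smax k m h d) (L := ell n k m h d) lambda in
  MDS_array_code k C /\
  (forall i, (i < m)%N -> optimal_repair k C (h i) (d i)).
Proof.
(* The bound on #|F| is implied by the injectivity of [lambda]. *)
move=> _ lt_kn m_gt0 h_range d_range sI_sorted _ lambda_inj C.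
have h_gt0 i : (i < m)%N -> (0 < h i)%N by move=> /h_range /andP[].
have lt_m1 : (m.-1 < m)%N by rewrite prednK.
split; first exact: inC4_MDS (ltnW lt_kn) (sI_gt0 k d (h_gt0 _ lt_m1)) lambda_inj.
move=> i lt_im; apply: inC4_optimal_repair; rewrite ?h_gt0 ?d_range //.
by apply: sI_sorted; rewrite // -ltnS prednK.
Qed.
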